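(* Let $\lambda=\sigma\Lambda+r\gamma\in W\Lambda$ ($\sigma\in S_n$, $\gamma\in Q$) and let $\alpha$ be a positive root. Then $(\lambda,\lambda^\alpha)$ is admissible if and only if one of the following holds: (i) $(\sigma\Lambda,\alpha)>0$, and for every decomposition $\alpha=\beta+\gamma'$ with $\beta,\gamma'$ positive roots, $(\sigma\Lambda,\beta)<0$ or $(\sigma\Lambda,\gamma')<0$; (ii) $(\sigma\Lambda,\alpha)<0$, and for every decomposition $\alpha=\beta+\gamma'$ with $\beta,\gamma'$ positive roots, $(\sigma\Lambda,\beta)<0$ and $(\sigma\Lambda,\gamma')<0$.
   Context: Fix integers $n\ge2$, $r\ge n+2$. $\varepsilon_1,\dots,\varepsilon_n$ orthonormal basis of $\mathbb R^n$ with inner product $(\cdot,\cdot)$; $\bar\varepsilon_i=\varepsilon_i-\frac1n\sum_j\varepsilon_j$, $P=\sum_i\mathbb Z\bar\varepsilon_i$, $\alpha_i=\varepsilon_i-\varepsilon_{i+1}$, $Q=\sum_i\mathbb Z\alpha_i$, $\theta=\alpha_1+\dots+\alpha_{n-1}$; positive roots $\varepsilon_i-\varepsilon_j$ ($i<j$). Fix $\Lambda\in P$ with $(\Lambda,\alpha_i)>0$ for all $i$ and $(\Lambda,\theta)<r$. $S_n$ permutes the $\varepsilon_i$; $\ell(\sigma)$ is the length. Every element of $W\Lambda=\{\sigma\Lambda+r\gamma:\sigma\in S_n,\gamma\in Q\}$ has a unique such expression, and $\deg(\sigma\Lambda+r\gamma)=\ell(\sigma)-2|\gamma|$ with $|\sum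 c_i\alpha_i|=\sum c_i$. For a positive root $\alpha$, $m_\alpha(\lambda)$ is the integer with $0<m_\alpha(\lambda)<r$, $m_\alpha(\lambda)\equiv(\lambda,\alpha)\bmod r$; $\lambda^\alpha=\lambda-m_\alpha(\lambda)\alpha$. The pair $(\lambda,\lambda^\alpha)$ is admissible if $\deg\lambda^\alpha=\deg\lambda+1$. *)

(* Weights are row vectors in Q^n (the ambient R^n restricted
   to the rational points, which contain P). *)
From HB Require Import structures.
From mathcomp Require Import all_boot all_order all_algebra all_fingroup.
Set Implicit Arguments. Unset Strict Implicit. Unset Printing Implicit Defensive.
Import Order.TTheory GRing.Theory Num.Theory.
Local Open Scope ring_scope.

Section Defs.
Variable n : nat.

(* epsilon_k, for k a natural number index (0-based); zero if k >= n *)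
Definition epsn (k : nat) : 'rV[rat]_n := \row_(j < n) ((nat_of_ord j == k)%:R).
Definition eps (i : 'I_n) : 'rV[rat]_n := epsn i.

Definition ip (u v : 'rV[rat]_n) : rat := \sum_(j < n) u 0 j * v 0 j.

Definition epsbar (i : 'I_n) : 'rV[rat]_n :=
  eps i - (n%:R)^-1 *: \sum_(j < n) eps j.
Definition inP (v : 'rV[rat]_n) : Prop :=
  exists c : 'I_n -> int, v = \sum_(i < n) (c i)%:~R *: epsbar i.

(* simple roots alpha_{k+1} = eps_{k+1} - eps_{k+2}, k < n-1 (0-based) *)
Definition alpha (k : 'I_n.-1) : 'rV[rat]_n := epsn k - epsn k.+1.
Definition theta : 'rV[rat]_n := \sum_(k < n.-1) alpha k.

(* an element gamma = sum c_k alpha_k of Q, given by its coefficients, and |gamma| *)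
Definition gam (c : 'I_n.-1 -> int) : 'rV[rat]_n := \sum_(k < n.-1) (c k)%:~R *: alpha k.
Definition absQ (c : 'I_n.-1 -> int) : int := \sum_(k < n.-1) c k.

(* positive root eps_i - eps_j (intended with i < j) *)
Definition proot (i j : 'I_n) : 'rV[rat]_n := eps i - eps j.

(* S_n permutes the eps_i : sigma eps_i = eps_(sigma i) *)
Definition sact (s : 'S_n) (v : 'rV[rat]_n) : 'rV[rat]_n := \row_(j < n) v 0 ((s^-1)%g j).

(* Coxeter length of a permutation = number of inversions *)
Definition plength (s : 'S_n) : nat :=
  #|[set p : 'I_n * 'I_n | (p.1 < p.2)%N && (s p.2 < s p.1)%N]|.

Variable r : nat.
Variable Lam : 'rV[rat]_n.

(* deg lam = d, where lam = sigma Lam + r gamma (expression unique by the paper) *)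
Definition is_deg (lam : 'rV[rat]_n) (d : int) : Prop :=
  exists (s : 'S_n) (c : 'I_n.-1 -> int),
    lam = sact s Lam + r%:R *: gam c /\ d = (plength s)%:Z - 2 * absQ c.

Definition admissible (lam mu : 'rV[rat]_n) : Prop :=
  exists d : int, is_deg lam d /\ is_deg mu (d + 1).

Definition malpha (lam a : 'rV[rat]_n) : rat :=
  ip lam a - r%:R * (Num.floor (ip lam a / r%:R))%:~R.

Definition refl (lam a : 'rV[rat]_n) : 'rV[rat]_n := lam - malpha lam a *: a.

End Defs.

From HB Require Import structures.
From mathcomp Require Import all_boot all_order all_algebra all_fingroup.
From mathcomp Require Import zify ring lra.
Import Order.TTheory GRing.Theory Num.Theory.
Local Open Scope ring_scope.
Set Implicit Arguments. Unset Strict Implicit. Unset Printing Implicit Defensive.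

(* Write lambda = sigma Lam + r gamma and alpha = eps_i - eps_j.  Strict dominance and
   (Lam, theta) < r put all coordinate differences of Lam in (-r, r), so the expression of
   an element of W Lam is unique and admissibility is a statement about degrees.  Since
   (gamma, alpha) is an integer, m_alpha(lambda) is (sigma Lam, alpha) when this is
   positive and (sigma Lam, alpha) + r when it is negative; accordingly lambda^alpha is
   sigma s_alpha Lam + r gamma, resp. sigma s_alpha Lam + r (gamma - alpha), where
   |gamma - alpha| = |gamma| - (j - i).  Composing with the transposition (i j) changes the
   number of inversions by 1 + 2m, up to sign, where m counts the k in (i, j) whose
   position under sigma^-1 lies between those of i and j.  So the degree goes up by exactly
   one iff m = 0 in the first case and m = j - i - 1 in the second, and these are the two
   conditions of the statement because the decompositions of eps_i - eps_j into two
   positive roots are exactly (eps_i - eps_k) + (eps_k - eps_j) with i < k < j. *)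

Section InnerProduct.
Variable n : nat.
Implicit Types (u v w : 'rV[rat]_n) (a b k : 'I_n).

Lemma ipC u v : ip u v = ip v u.
Proof. by apply: eq_bigr => k _; rewrite mulrC. Qed.

Lemma ipDl u v w : ip (u + v) w = ip u w + ip v w.
Proof. by rewrite /ip -big_split; apply: eq_bigr => k _; rewrite mxE mulrDl. Qed.

Lemma ipZl x u w : ip (x *: u) w = x * ip u w.
Proof. by rewrite /ip mulr_sumr; apply: eq_bigr => k _; rewrite mxE mulrA. Qed.

Lemma ipBl u v w : ip (u - v) w = ip u w - ip v w.
Proof. by rewrite -scaleN1r ipDl ipZl mulN1r. Qed.

Lemma ipBr u v w : ip w (u - v) = ip w u - ip w v.
Proof. by rewrite !(ipC w) ipBl. Qed.

Lemma ip_suml (I : finType) (F : I -> 'rV[rat]_n) w :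
  ip (\sum_(x : I) F x) w = \sum_(x : I) ip (F x) w.
Proof. by rewrite /ip exchange_big; apply: eq_bigr => k _; rewrite summxE mulr_suml. Qed.

Lemma ip_epsn v m (lt_mn : (m < n)%N) : ip v (epsn n m) = v 0 (Ordinal lt_mn).
Proof.
rewrite /ip (bigD1 (Ordinal lt_mn)) //= big1 ?addr0 => [|k].
  by rewrite mxE eqxx mulr1.
by rewrite -val_eqE mxE /= => /negbTE ->; rewrite mulr0.
Qed.

Lemma ip_eps v k : ip v (eps k) = v 0 k.
Proof. by rewrite /eps ip_epsn; congr (v 0 _); apply: val_inj. Qed.

Lemma ip_proot v a b : ip v (proot a b) = v 0 a - v 0 b.
Proof. by rewrite ipBr !ip_eps. Qed.

End InnerProduct.

Section PermutationAction.
Variable n : nat.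
Implicit Types (v : 'rV[rat]_n) (s t : 'S_n) (i j : 'I_n).

Lemma sactE s v k : sact s v 0 k = v 0 (s^-1 k)%g.
Proof. by rewrite mxE. Qed.

Lemma sactM s t v : sact (s * t)%g v = sact t (sact s v).
Proof. by apply/rowP => k; rewrite !mxE invMg permM. Qed.

Lemma sact_tperm i j v : i != j ->
  sact (tperm i j) v = v - ip v (proot i j) *: proot i j.
Proof.
move=> nij; rewrite ip_proot; apply/rowP => k; rewrite !mxE tpermV.
have [-> | -> | /eqP nki /eqP nkj] := tpermP; rewrite ?eqxx.
- by move: nij; rewrite -val_eqE => /negbTE ->; rewrite /=; ring.
- by move: nij; rewrite -val_eqE eq_sym => /negbTE ->; rewrite /=; ring.
- by move: nki nkj; rewrite -!val_eqE => /negbTE -> /negbTE ->; rewrite /=; ring.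
Qed.

End PermutationAction.

Section InversionCount.
Variable n : nat.
Implicit Types (p q : 'S_n) (i j k l : 'I_n).

Local Notation indz b := ((nat_of_bool b)%:Z).

Lemma plengthE q :
  (plength q)%:Z = \sum_(k : 'I_n) \sum_(l : 'I_n) indz (k < l)%N * indz (q l < q k)%N.
Proof.
rewrite /plength -sum1_card big_mkcond (big_morph Posz PoszD (erefl _)) pair_bigA.
by apply: eq_bigr => x _; rewrite inE -PoszM mulnb; case: (_ && _).
Qed.

Lemma plengthV q : plength q^-1 = plength q.
Proof.
have: (plength q^-1)%:Z = (plength q)%:Z; last by case.
rewrite !plengthE exchange_big (reindex_inj (@perm_inj _ q)).
apply: eq_bigr => k _; rewrite (reindex_inj (@perm_inj _ q)).
by apply: eq_bigr => l _; rewrite !permK mulrC.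
Qed.

Lemma card_between i j : #|[set l : 'I_n | (i < l < j)%N]| = (j - i.+1)%N.
Proof.
rewrite -sum1_card -[RHS]muln1 -sum_nat_const_nat.
rewrite (big_nat_widen _ _ _ _ _ (ltnW (ltn_ord j))) big_geq_mkord.
by apply: eq_bigl => l; rewrite inE andbC.
Qed.

Lemma tperm_nat i j k :
  (tperm i j k : nat) = if k == i :> nat then j else if k == j :> nat then i else k.
Proof.
have [-> | -> | /eqP nki /eqP nkj] := tpermP; rewrite ?eqxx //.
- by case: eqP => // ->.
- by move: nki nkj; rewrite -!val_eqE => /negbTE -> /negbTE ->.
Qed.

Lemma indz_ltn_tperm i j k l : (i < j)%N ->
  indz (tperm i j k < tperm i j l)%N - indz (k < l)%N =
  indz (k == j :> nat) * indz (l == i :> nat) - indz (k == i :> nat) * indz (l == j :> nat)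
  + indz (k == j :> nat) * indz (i < l < j)%N + indz (l == i :> nat) * indz (i < k < j)%N
  - indz (k == i :> nat) * indz (i < l < j)%N - indz (l == j :> nat) * indz (i < k < j)%N.
Proof.
move=> lt_ij; rewrite !tperm_nat.
by case: (eqVneq (k : nat) i); case: (eqVneq (k : nat) j);
   case: (eqVneq (l : nat) i); case: (eqVneq (l : nat) j); lia.
Qed.

Lemma sum_indz_eq (a : 'I_n) (F : 'I_n -> int) : \sum_(k : 'I_n) indz (k == a :> nat) * F k = F a.
Proof.
rewrite (bigD1 a) //= eqxx mul1r big1 ?addr0 // => k.
by rewrite -val_eqE => /negbTE ->; rewrite mul0r.
Qed.

Lemma plength_tperm_mulE p i j : (i < j)%N ->
  (plength (tperm i j * p))%:Z - (plength p)%:Z =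
  indz (p i < p j)%N - indz (p j < p i)%N +
  \sum_(l : 'I_n) indz (i < l < j)%N *
    (indz (p l < p j)%N + indz (p i < p l)%N - indz (p l < p i)%N - indz (p j < p l)%N).
Proof.
move=> lt_ij; set t := tperm i j.
pose Y k l := indz (p l < p k)%N; pose c l := indz (i < l < j)%N.
have -> : (plength (t * p))%:Z = \sum_k \sum_l indz (t k < t l)%N * Y k l.
  rewrite plengthE (reindex_inj (@perm_inj _ t)); apply: eq_bigr => k _.
  rewrite (reindex_inj (@perm_inj _ t)); apply: eq_bigr => l _.
  by rewrite !permM !tpermK.
rewrite plengthE -sumrB; under eq_bigr => k _ do rewrite -sumrB.
have expand k l : (indz (t k < t l)%N - indz (k < l)%N) * Y k l =
    indz (k == j :> nat) * (indz (l == i :> nat) * Y k l)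
  - indz (k == i :> nat) * (indz (l == j :> nat) * Y k l)
  + indz (k == j :> nat) * (c l * Y k l) + indz (l == i :> nat) * (c k * Y k l)
  - indz (k == i :> nat) * (c l * Y k l) - indz (l == j :> nat) * (c k * Y k l).
  by rewrite indz_ltn_tperm //; ring.
under eq_bigr => k _ do under eq_bigr => l _ do rewrite -mulrBl expand.
under eq_bigr => k _ do rewrite !big_split /= !sumrN.
rewrite !big_split /= !sumrN.
have sum_row (a : 'I_n) (G : 'I_n -> 'I_n -> int) :
    \sum_(k : 'I_n) \sum_(l : 'I_n) indz (k == a :> nat) * G k l = \sum_(l : 'I_n) G a l.
  by rewrite -(sum_indz_eq a (fun k => \sum_l G k l)); apply: eq_bigr => k _; rewrite mulr_sumr.
have sum_col (a : 'I_n) (G : 'I_n -> 'I_n -> int) :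
    \sum_(k : 'I_n) \sum_(l : 'I_n) indz (l == a :> nat) * G k l = \sum_(k : 'I_n) G k a.
  by apply: eq_bigr => k _; rewrite sum_indz_eq.
rewrite !sum_row !sum_col !sum_indz_eq.
under [X in _ = _ + X]eq_bigr => l _ do rewrite mulrBr mulrBr mulrDr.
by rewrite !big_split /= !sumrN /Y /c; ring.
Qed.

Lemma perm_neq_between p i j k : (i < k < j)%N ->
  (p k != p i :> nat) && (p k != p j :> nat).
Proof.
case/andP=> lt_ik lt_kj; rewrite !val_eqE !(inj_eq perm_inj).
by rewrite -!val_eqE /= gtn_eqF ?ltn_eqF.
Qed.

Lemma tperm_between i j k : (i < k < j)%N -> tperm i j k = k.
Proof.
case/andP=> lt_ik lt_kj.
by apply: tpermD; rewrite -val_eqE /= ?(ltn_eqF lt_ik) ?(gtn_eqF lt_kj).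
Qed.

Lemma plength_tperm_mul p i j : (i < j)%N -> (p i < p j)%N ->
  plength (tperm i j * p) =
    (plength p + 1 + 2 * #|[set l : 'I_n | (i < l < j)%N & (p i < p l < p j)%N]|)%N.
Proof.
move=> lt_ij lt_pij; set A := [set l | _ & _].
have cardA : (#|A|)%:Z = \sum_l indz (l \in A).
  rewrite -sum1_card big_mkcond (big_morph Posz PoszD (erefl _)).
  by apply: eq_bigr => l _; case: (l \in A).
have termE l : indz (i < l < j)%N *
    (indz (p l < p j)%N + indz (p i < p l)%N - indz (p l < p i)%N - indz (p j < p l)%N)
    = 2 * indz (l \in A).
  rewrite inE; have [lij | _] := boolP (i < l < j)%N; last by rewrite mul0r.
  by have /andP := perm_neq_between p lij; lia.
have := plength_tperm_mulE p lt_ij.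
rewrite (eq_bigr _ (fun l _ => termE l)) -mulr_sumr -cardA; lia.
Qed.

End InversionCount.

Lemma proot_add_proot_nat (i j i1 j1 i2 j2 : nat) : (i1 < j1)%N -> (i2 < j2)%N ->
  let C p := ((p == i) + (p == j1) + (p == j2) = (p == j) + (p == i1) + (p == i2))%N in
  C i -> C j -> C i1 -> C i2 ->
  (i1 = i /\ j1 = i2 /\ j2 = j) \/ (i2 = i /\ j2 = i1 /\ j1 = j).
Proof.
move=> lt1 lt2 C Ci Cj Ci1 Ci2.
have [] : i1 = i \/ i1 = j2 by move: Ci1; rewrite /C; lia.
all: have [] : i2 = i \/ i2 = j1 by move: Ci2; rewrite /C; lia.
all: move=> e2 e1; subst.
- by move: Ci; rewrite /C; lia.
- by left; move: Cj; rewrite /C; lia.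
- by right; move: Cj; rewrite /C; lia.
- lia.
Qed.

Section PositiveRoots.
Variable n : nat.
Implicit Types (i j k : 'I_n).

Lemma proot_add_coord i j i1 j1 i2 j2 :
  proot i j = proot i1 j1 + proot i2 j2 -> forall p : 'I_n,
  ((p == i :> nat) + (p == j1 :> nat) + (p == j2 :> nat) =
   (p == j :> nat) + (p == i1 :> nat) + (p == i2 :> nat))%N.
Proof.
move=> /rowP E p; move: (E p); rewrite !mxE => Ep.
by apply/eqP; rewrite -(eqr_nat rat) !natrD; apply/eqP; lra.
Qed.

Lemma proot_add_proot i j i1 j1 i2 j2 : (i1 < j1)%N -> (i2 < j2)%N ->
  proot i j = proot i1 j1 + proot i2 j2 ->
  (i1 = i /\ j1 = i2 /\ j2 = j) \/ (i2 = i /\ j2 = i1 /\ j1 = j).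
Proof.
move=> lt1 lt2 /proot_add_coord C.
case: (proot_add_proot_nat lt1 lt2 (C i) (C j) (C i1) (C i2))
  => [] [/val_inj -> [/val_inj -> /val_inj ->]]; by [left | right].
Qed.

Lemma proot_decompP (Q : 'I_n -> 'I_n -> 'I_n -> 'I_n -> Prop) i j :
  (forall a b c d, Q a b c d -> Q c d a b) ->
  (forall i1 j1 i2 j2, (i1 < j1)%N -> (i2 < j2)%N ->
     proot i j = proot i1 j1 + proot i2 j2 -> Q i1 j1 i2 j2) <->
  (forall k, (i < k < j)%N -> Q i k k j).
Proof.
move=> Qsym; split=> [H k /andP [lt_ik lt_kj] | H i1 j1 i2 j2 lt1 lt2 E].
  by apply: H => //; rewrite /proot addrA subrK.
have [[e1 [e2 e3]] | [e1 [e2 e3]]] := proot_add_proot lt1 lt2 E;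
  move: lt1 lt2; rewrite e1 e2 e3 => lt1 lt2.
- by apply: H; rewrite lt1 lt2.
- by apply: Qsym; apply: H; rewrite lt1 lt2.
Qed.

End PositiveRoots.

Section RootLattice.
Variable n : nat.
Implicit Types (c d : 'I_n.-1 -> int) (i j : 'I_n).

Lemma gam_int c (p : 'I_n) : gam c 0 p \is a Num.int.
Proof. by rewrite summxE rpred_sum // => k _; rewrite !mxE rpredM ?rpredB ?intr_int ?natr_int. Qed.

Lemma gamB c d : gam (fun k => c k - d k) = gam c - gam d.
Proof. by rewrite /gam -sumrB; apply: eq_bigr => k _; rewrite intrB scalerBl. Qed.

Definition proot_coef i j (k : 'I_n.-1) : int := (i <= k < j)%N.

Lemma gam_proot_coef i j : (i <= j)%N -> gam (proot_coef i j) = proot i j.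
Proof.
move=> le_ij; have le_jn : (j <= n.-1)%N by have := ltn_ord j; lia.
rewrite /gam (eq_bigr (fun k : 'I_n.-1 => if (i <= k < j)%N then alpha k else 0)); last first.
  by move=> k _; rewrite /proot_coef; case: ifP; rewrite ?scale1r ?scale0r.
rewrite -big_mkcond.
have -> : \sum_(k < n.-1 | (i <= k < j)%N) alpha k = \sum_(i <= k < j) (epsn n k - epsn n k.+1).
  by rewrite (big_nat_widen _ _ _ _ _ le_jn) big_geq_mkord; apply: eq_bigl => k; rewrite andbC.
rewrite (@telescope_sumr_eq _ i j (fun k => - epsn n k)) //; first by rewrite opprK addrC.
by move=> k _; rewrite opprK addrC.
Qed.

(* [(alpha_k, heightv) = -1] for every simple root, so the height [|gamma|] is
   the linear form [- (gamma, heightv)]. *)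
Definition heightv : 'rV[rat]_n := \row_(p < n) (p : nat)%:R.

Lemma absQ_gam c : (absQ c)%:~R = - ip (gam c) heightv.
Proof.
rewrite /absQ /gam ip_suml rmorph_sum -sumrN; apply: eq_bigr => k _.
have lt_kn : (k < n)%N by have := ltn_ord k; lia.
have lt_k1n : (k.+1 < n)%N by have := ltn_ord k; lia.
by rewrite ipZl ipC ipBr (ip_epsn _ lt_kn) (ip_epsn _ lt_k1n) !mxE /= -addn1 natrD; ring.
Qed.

Lemma ip_proot_heightv i j : ip (proot i j) heightv = (i : nat)%:R - (j : nat)%:R.
Proof. by rewrite ipC ip_proot !mxE. Qed.

End RootLattice.

Lemma malpha_eq (n r : nat) (lam a : 'rV[rat]_n) (t : rat) (w : int) :
  (0 < r)%N -> 0 <= t < r%:R -> ip lam a = t + r%:R * w%:~R -> malpha r lam a = t.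
Proof.
move=> r_gt0 /andP [t_ge0 t_ltr] E; have r_pos : 0 < (r%:R : rat) by rewrite ltr0n.
rewrite /malpha; suff -> : Num.floor (ip lam a / r%:R) = w by rewrite E; ring.
have t_div_ge0 : 0 <= t / r%:R by rewrite divr_ge0 ?ler0n.
have t_div_lt1 : t / r%:R < 1 by rewrite ltr_pdivrMr // mul1r.
apply: floor_def; rewrite E mulrDl mulrAC divff ?mul1r ?gt_eqF // intrD rmorph1.
by apply/andP; split; lra.
Qed.

Section DominantWeight.
Variables (n : nat) (Lam : 'rV[rat]_n).
Hypothesis Hdom : forall k : 'I_n.-1, 0 < ip Lam (alpha k).
Implicit Types p q : 'I_n.

Let L k := ip Lam (epsn n k).

Let L_decreasing : {in [pred k | (k < n)%N] &, {homo L : k l / (k < l)%N >-> l < k}}.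
Proof.
apply: homo_ltn_in => [y x z xy yz | k l | k _ /[!inE] lt_k1n].
- exact: lt_trans yz xy.
- by rewrite !inE => _ lt_ln m /andP [_ lt_ml]; apply: ltn_trans lt_ln.
- have lt_kn1 : (k < n.-1)%N by lia.
  by have := Hdom (Ordinal lt_kn1); rewrite ipBr subr_gt0.
Qed.

Lemma dominant_ltE p q : (Lam 0 p < Lam 0 q) = (q < p)%N.
Proof.
rewrite -!(ip_eps Lam); case: ltngtP => [lt_qp | lt_pq | /val_inj ->].
- exact: L_decreasing (ltn_ord q) (ltn_ord p) lt_qp.
- exact/lt_gtF/(L_decreasing (ltn_ord p) (ltn_ord q) lt_pq).
- exact: ltxx.
Qed.

Lemma dominant_leE p q : (Lam 0 p <= Lam 0 q) = (q <= p)%N.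
Proof. by rewrite leNgt dominant_ltE -leqNgt. Qed.

Lemma dominant_coord_sub_le p q : Lam 0 p - Lam 0 q <= ip Lam (theta n).
Proof.
have n_gt0 : (0 < n)%N by apply: leq_ltn_trans (ltn_ord p).
have ltn1 : (n.-1 < n)%N by lia.
have thetaE : ip Lam (theta n) = L 0 - L n.-1.
  rewrite ipC /theta ip_suml (eq_bigr (fun k : 'I_n.-1 => L k - L k.+1)); last first.
    by move=> k _; rewrite ipC ipBr.
  rewrite -(big_mkord xpredT (fun k => L k - L k.+1)).
  rewrite (@telescope_sumr_eq _ 0 n.-1 (fun k => - L k)) => [|//|k _].
    by rewrite opprK addrC.
  by rewrite opprK addrC.
rewrite thetaE lerB //.
- have -> : L 0 = Lam 0 (Ordinal n_gt0) := ip_eps Lam (Ordinal n_gt0).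
  by rewrite dominant_leE.
- have -> : L n.-1 = Lam 0 (Ordinal ltn1) := ip_eps Lam (Ordinal ltn1).
  by rewrite dominant_leE -ltnS prednK // ltn_ord.
Qed.

Lemma ip_sact_proot_gt0 (s : 'S_n) (a b : 'I_n) :
  (0 < ip (sact s Lam) (proot a b)) = ((s^-1)%g a < (s^-1)%g b)%N.
Proof. by rewrite ip_proot !sactE subr_gt0 dominant_ltE. Qed.

Lemma ip_sact_proot_lt0 (s : 'S_n) (a b : 'I_n) :
  (ip (sact s Lam) (proot a b) < 0) = ((s^-1)%g b < (s^-1)%g a)%N.
Proof. by rewrite ip_proot !sactE subr_lt0 dominant_ltE. Qed.

Lemma sact_proot_decompE (op : Prop -> Prop -> Prop) (s : 'S_n) (i j : 'I_n) :
  (forall A B, op A B -> op B A) ->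
  (forall i1 j1 i2 j2 : 'I_n, (i1 < j1)%N -> (i2 < j2)%N ->
     proot i j = proot i1 j1 + proot i2 j2 ->
     op (ip (sact s Lam) (proot i1 j1) < 0) (ip (sact s Lam) (proot i2 j2) < 0)) <->
  (forall k : 'I_n, (i < k < j)%N ->
     op ((s^-1)%g k < (s^-1)%g i)%N ((s^-1)%g j < (s^-1)%g k)%N).
Proof.
move=> op_sym.
pose Q a b c d := op (ip (sact s Lam) (proot a b) < 0) (ip (sact s Lam) (proot c d) < 0).
apply: iff_trans (@proot_decompP _ Q i j (fun a b c d => op_sym _ _)) _.
by rewrite /Q; split=> H k /H; rewrite !ip_sact_proot_lt0.
Qed.

End DominantWeight.

Section Alcove.
Variables (n r : nat) (Lam : 'rV[rat]_n).
Hypothesis Hdom : forall k : 'I_n.-1, 0 < ip Lam (alpha k).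
Hypothesis Hwidth : forall p q : 'I_n, Lam 0 p - Lam 0 q < r%:R.
Hypothesis r_gt0 : (0 < r)%N.
Implicit Types (p q i j a b : 'I_n) (s : 'S_n) (c : 'I_n.-1 -> int).

Lemma dominant_coord_eqmod p q (z : int) : Lam 0 p - Lam 0 q = r%:R * z%:~R -> p = q.
Proof.
have r_pos : 0 < (r%:R : rat) by rewrite ltr0n.
have lt1 a b (w : int) : Lam 0 a - Lam 0 b = r%:R * w%:~R -> w < 1.
  by move=> E; rewrite -(ltrz1 rat) -(ltr_pM2l r_pos) mulr1 -E Hwidth.
move=> E; have z0 : z = 0.
  have := lt1 q p (- z); rewrite intrN mulrN -E opprB => /(_ erefl).
  by have := lt1 _ _ _ E; lia.
have eqL : Lam 0 p = Lam 0 q by apply/eqP; rewrite -subr_eq0 E z0 mulr0.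
by apply/val_inj/eqP; rewrite eqn_leq -!(dominant_leE Hdom) eqL lexx.
Qed.

Lemma sact_gam_inj s s' c c' :
  sact s Lam + r%:R *: gam c = sact s' Lam + r%:R *: gam c' -> s = s' /\ gam c = gam c'.
Proof.
move=> E; have ss' : s = s'.
  apply: invg_inj; apply/permP => k; have /rowP/(_ k) := E; rewrite !mxE => Ek.
  have /intrP [g gE] := gam_int c k; have /intrP [g' g'E] := gam_int c' k.
  by apply: (@dominant_coord_eqmod _ _ (g' - g)); rewrite intrB -gE -g'E; lra.
split=> //; move: E; rewrite ss' => /addrI /scalerI; apply.
by rewrite pnatr_eq0 -lt0n.
Qed.

Lemma admissibleE s c s' c' :
  admissible r Lam (sact s Lam + r%:R *: gam c) (sact s' Lam + r%:R *: gam c') <->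
  (plength s')%:Z - 2 * absQ c' = (plength s)%:Z - 2 * absQ c + 1.
Proof.
have absQ_eq c1 c2 : gam c1 = gam c2 -> absQ c1 = absQ c2.
  by move=> e; apply/eqP; rewrite -(eqr_int rat) !absQ_gam e.
split=> [[d [[s1 [c1 [E1 D1]]] [s2 [c2 [E2 D2]]]]] | E].
  have [ss1 /absQ_eq ec1] := sact_gam_inj E1; have [ss2 /absQ_eq ec2] := sact_gam_inj E2.
  by rewrite ss1 ss2 ec1 ec2 -D1 D2.
by exists ((plength s)%:Z - 2 * absQ c); split; [exists s, c | exists s', c'; rewrite E].
Qed.

Lemma refl_sact_pos s c i j : 0 < ip (sact s Lam) (proot i j) ->
  refl r (sact s Lam + r%:R *: gam c) (proot i j) = sact (s * tperm i j) Lam + r%:R *: gam c.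
Proof.
move=> pos; have nij : i != j by apply: contraTneq pos => ->; rewrite ip_proot subrr ltxx.
have /intrP [w wE] : ip (gam c) (proot i j) \is a Num.int by rewrite ip_proot rpredB ?gam_int.
have E : ip (sact s Lam + r%:R *: gam c) (proot i j) = ip (sact s Lam) (proot i j) + r%:R * w%:~R.
  by rewrite ipDl ipZl wE.
rewrite /refl (malpha_eq r_gt0 _ E); first by rewrite sactM sact_tperm // addrAC.
by rewrite ltW //= ip_proot !sactE Hwidth.
Qed.

Lemma refl_sact_neg s c i j : (i < j)%N -> ip (sact s Lam) (proot i j) < 0 ->
  refl r (sact s Lam + r%:R *: gam c) (proot i j) =
  sact (s * tperm i j) Lam + r%:R *: gam (fun k => c k - proot_coef i j k).
Proof.
move=> lt_ij neg; have nij : i != j by rewrite -val_eqE /= ltn_eqF.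
have /intrP [w wE] : ip (gam c) (proot i j) \is a Num.int by rewrite ip_proot rpredB ?gam_int.
have E : ip (sact s Lam + r%:R *: gam c) (proot i j) =
    (ip (sact s Lam) (proot i j) + r%:R) + r%:R * (w - 1)%:~R.
  by rewrite ipDl ipZl wE intrB rmorph1; ring.
rewrite /refl (malpha_eq r_gt0 _ E).
  rewrite gamB (gam_proot_coef (ltnW lt_ij)) sactM sact_tperm // scalerDl.
  by rewrite (scalerBr r%:R (gam c)) opprD addrACA.
have := Hwidth ((s^-1)%g j) ((s^-1)%g i).
by move: neg; rewrite !ip_proot !sactE => neg bound; apply/andP; split; lra.
Qed.

Lemma admissible_refl_pos s c i j : (i < j)%N -> ((s^-1)%g i < (s^-1)%g j)%N ->
  admissible r Lam (sact s Lam + r%:R *: gam c)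
    (refl r (sact s Lam + r%:R *: gam c) (proot i j)) <->
  (forall k : 'I_n, (i < k < j)%N -> ((s^-1)%g k < (s^-1)%g i)%N \/ ((s^-1)%g j < (s^-1)%g k)%N).
Proof.
move=> lt_ij lt_sij; set p := (s^-1)%g in lt_sij *.
rewrite refl_sact_pos ?(ip_sact_proot_gt0 Hdom) // admissibleE.
set A := [set k : 'I_n | (i < k < j)%N & (p i < p k < p j)%N].
have -> : plength (s * tperm i j) = (plength s + 1 + 2 * #|A|)%N.
  by rewrite -plengthV invMg tpermV plength_tperm_mul // plengthV.
transitivity (A = set0).
  by split=> [E | ->]; [apply: cards0_eq; lia | rewrite cards0; lia].
split=> [A0 k kij | H].
  have : k \notin A by rewrite A0 inE.
  by rewrite inE kij /=; have /andP := perm_neq_between p kij; lia.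
apply/setP => k; rewrite !inE; have [kij | //] := boolP (i < k < j)%N.
by have := H k kij; have /andP := perm_neq_between p kij; lia.
Qed.

Lemma admissible_refl_neg s c i j : (i < j)%N -> ((s^-1)%g j < (s^-1)%g i)%N ->
  admissible r Lam (sact s Lam + r%:R *: gam c)
    (refl r (sact s Lam + r%:R *: gam c) (proot i j)) <->
  (forall k : 'I_n, (i < k < j)%N -> ((s^-1)%g k < (s^-1)%g i)%N /\ ((s^-1)%g j < (s^-1)%g k)%N).
Proof.
move=> lt_ij lt_sji; set p := (s^-1)%g in lt_sji *.
rewrite refl_sact_neg ?(ip_sact_proot_lt0 Hdom) // admissibleE.
have -> : absQ (fun k => c k - proot_coef i j k) = absQ c + (i : nat)%:Z - (j : nat)%:Z.
  apply/eqP; rewrite -(eqr_int rat) intrB intrD !absQ_gam gamB (gam_proot_coef (ltnW lt_ij)).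
  by rewrite ipBl ip_proot_heightv !pmulrn; apply/eqP; ring.
set B := [set k : 'I_n | (i < k < j)%N].
set A := [set k : 'I_n | (i < k < j)%N & (p j < p k < p i)%N].
have -> : plength s = (plength (s * tperm i j) + 1 + 2 * #|A|)%N.
  rewrite -plengthV -[in RHS]plengthV invMg tpermV -/p.
  have {1}-> : p = (tperm i j * (tperm i j * p))%g by rewrite mulgA tperm2 mul1g.
  rewrite plength_tperm_mul ?permM ?tpermL ?tpermR //; congr (_ + _ + _ * _)%N.
  apply: eq_card => k; rewrite !inE permM.
  by have [kij | //] := boolP (i < k < j)%N; rewrite tperm_between.
transitivity (A = B).
  split=> [E | ->]; last by rewrite card_between; lia.
  apply/eqP; rewrite eqEcard card_between; apply/andP; split; last by lia.
  by apply/subsetP => k; rewrite !inE => /andP [].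
split=> [AB k kij | H].
  have : k \in A by rewrite AB inE.
  by rewrite inE kij /= => /andP [? ?]; split.
apply/setP => k; rewrite !inE; have [kij | //] := boolP (i < k < j)%N.
by case: (H k kij) => -> ->.
Qed.

End Alcove.

Theorem lemmaA3 (n r : nat) (hn : (2 <= n)%N) (hr : (n + 2 <= r)%N)
  (Lam : 'rV[rat]_n) (HP : inP Lam)
  (Hdom : forall k : 'I_n.-1, 0 < ip Lam (alpha k))
  (Htheta : ip Lam (theta n) < r%:R)
  (s : 'S_n) (c : 'I_n.-1 -> int) (i j : 'I_n) (hij : (i < j)%N) :
  admissible r Lam (sact s Lam + r%:R *: gam c)
    (refl r (sact s Lam + r%:R *: gam c) (proot i j))
  <->
  ((0 < ip (sact s Lam) (proot i j) /\
     forall i1 j1 i2 j2 : 'I_n, (i1 < j1)%N -> (i2 < j2)%N ->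
       proot i j = proot i1 j1 + proot i2 j2 ->
       ip (sact s Lam) (proot i1 j1) < 0 \/ ip (sact s Lam) (proot i2 j2) < 0)
   \/
   (ip (sact s Lam) (proot i j) < 0 /\
     forall i1 j1 i2 j2 : 'I_n, (i1 < j1)%N -> (i2 < j2)%N ->
       proot i j = proot i1 j1 + proot i2 j2 ->
       ip (sact s Lam) (proot i1 j1) < 0 /\ ip (sact s Lam) (proot i2 j2) < 0)).
Proof.
have r_gt0 : (0 < r)%N by lia.
have Hwidth p q : Lam 0 p - Lam 0 q < r%:R := le_lt_trans (dominant_coord_sub_le Hdom p q) Htheta.
rewrite (ip_sact_proot_gt0 Hdom) (ip_sact_proot_lt0 Hdom).
rewrite (sact_proot_decompE Hdom (op := or)); last by move=> A B [] ; [right | left].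
rewrite (sact_proot_decompE Hdom (op := and)); last by move=> A B [].
case: ltngtP => [lt_sij | lt_sji | /val_inj/perm_inj eq_ij].
- by rewrite admissible_refl_pos //; split=> [H | [[_ H] | []]] //; left.
- by rewrite admissible_refl_neg //; split=> [H | [[] | [_ H]]] //; right.
- by move: hij; rewrite eq_ij ltnn.
Qed.
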